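(* Let $x_0,\ldots,x_k$ be points of the unit sphere $\mathcal S_n\subset\mathbb R^{n+1}$ ($n\ge1$) with its canonical metric, and $X=[x_0,\ldots,x_k]$ the $(n+1)\times(k+1)$ matrix of their coordinates. Then $x_0,\ldots,x_k$ are affinely independent if and only if $\mathrm{rank}(X)=k+1$.
   Context: On $\mathcal S_n$ with the metric induced by $\mathbb R^{n+1}$, the cut locus of $x$ is $\{-x\}$ and $\log_x(y)=\frac{\theta}{\sin\theta}(y-\cos\theta\,x)$ with $\theta=\arccos(x^\top y)$. Points $x_0,\ldots,x_k$ of a Riemannian manifold are affinely independent if no $x_j$ ($j\neq i$) lies in the cut locus of $x_i$ and, for every $i$, the $k$ vectors $\{\log_{x_i}(x_j)\}_{j\ne i}$ are linearly independent in $T_{x_i}\mathcal S_n$. *)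

From Stdlib Require Import Reals Lra Lia List.
Open Scope R_scope.

(* Vectors of R^(n+1) are functions nat -> R; only coordinates 0..n matter. *)
Definition dot (n : nat) (u v : nat -> R) : R :=
  sum_f_R0 (fun i => u i * v i) n.

Definition on_sphere (n : nat) (x : nat -> R) : Prop := dot n x x = 1.

(* Cut locus of x on S_n is {-x}. *)
Definition in_cut_locus (n : nat) (x y : nat -> R) : Prop :=
  forall i, (i <= n)%nat -> y i = - x i.

(* Riemannian logarithm on S_n: log_x(y) = theta/sin theta (y - cos theta x),
   theta = arccos(x^T y).  (For y = x both conventions give the zero vector.) *)
Definition sph_log (n : nat) (x y : nat -> R) : nat -> R :=
  let theta := acos (dot n x y) in
  fun i => theta / sin theta * (y i - cos theta * x i).

(* Linear independence of the family (v j)_{j <= k, P j} in R^(n+1)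
   (equivalently in the tangent space, which is a linear subspace). *)
Definition lin_indep (n k : nat) (P : nat -> Prop) (v : nat -> nat -> R) : Prop :=
  forall c : nat -> R,
    (forall j, ~ P j -> c j = 0) ->
    (forall l, (l <= n)%nat -> sum_f_R0 (fun j => c j * v j l) k = 0) ->
    forall j, (j <= k)%nat -> c j = 0.

Definition affinely_independent (n k : nat) (x : nat -> nat -> R) : Prop :=
  (forall i j, (i <= k)%nat -> (j <= k)%nat -> j <> i -> ~ in_cut_locus n (x i) (x j)) /\
  (forall i, (i <= k)%nat ->
     lin_indep n k (fun j => j <> i) (fun j => sph_log n (x i) (x j))).

(* A (n+1) x (k+1) real matrix is a function X : nat -> nat -> R (row, column). *)
Definition col (X : nat -> nat -> R) (j : nat) : nat -> R := fun i => X i j.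

Definition has_rank (n k : nat) (X : nat -> nat -> R) (r : nat) : Prop :=
  (exists S : list nat, length S = r /\ NoDup S /\ (forall j, In j S -> (j <= k)%nat) /\
      lin_indep n k (fun j => In j S) (col X)) /\
  (forall T : list nat, NoDup T -> (forall j, In j T -> (j <= k)%nat) ->
      length T = Datatypes.S r -> ~ lin_indep n k (fun j => In j T) (col X)).

Definition coord_matrix (x : nat -> nat -> R) : nat -> nat -> R :=
  fun i j => x j i.

From Stdlib Require Import Reals Lra Lia List Classical.
Open Scope R_scope.

(* For unit vectors with x_j <> +-x_i, log_{x_i}(x_j) is a nonzero multiple
   of the tangential part x_j - <x_i,x_j> x_i of x_j.  Subtracting multiples of
   one column x_i from the others preserves linear independence, and since
   <x_i, .> recovers the x_i-coordinate of a combination, independence of the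
   tangential parts (j <> i) gives back independence of all the columns.
   Either condition rules out x_j = +-x_i. *)

Lemma sum_f_R0_swap (f : nat -> nat -> R) (m N : nat) :
  sum_f_R0 (fun i => sum_f_R0 (fun j => f i j) m) N
  = sum_f_R0 (fun j => sum_f_R0 (fun i => f i j) N) m.
Proof.
  induction N as [|N IHN]; simpl; [reflexivity|].
  rewrite IHN, <- plus_sum. reflexivity.
Qed.

Lemma sum_f_R0_delta (f : nat -> R) (s : R) (k i : nat) : (i <= k)%nat ->
  sum_f_R0 (fun j => (if Nat.eq_dec j i then s else 0) * f j) k = s * f i.
Proof.
  induction k as [|k IHk]; intros Hi.
  - simpl. destruct (Nat.eq_dec 0 i); [subst; reflexivity | lia].
  - rewrite tech5. destruct (Nat.eq_dec (S k) i) as [<-|Hki].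
    + rewrite sum_eq_R0; [ring|].
      intros j Hj; cbv beta. destruct (Nat.eq_dec j (S k)); [lia | ring].
    + rewrite IHk by lia. ring.
Qed.

Lemma dot_self_ge0 (n : nat) (w : nat -> R) : 0 <= dot n w w.
Proof. unfold dot; induction n; simpl; nra. Qed.

Lemma dot_self_eq0 (n : nat) (w : nat -> R) :
  dot n w w = 0 -> forall l, (l <= n)%nat -> w l = 0.
Proof.
  unfold dot; induction n as [|n IHn]; simpl; intros H l Hl.
  - assert (l = 0%nat) as -> by lia; nra.
  - pose proof (dot_self_ge0 n w) as Hge; unfold dot in Hge.
    destruct (Nat.eq_dec l (S n)) as [->|Hl']; [nra|].
    apply IHn; [nra | lia].
Qed.

Lemma dot_sub_scale_self (n : nat) (u v : nat -> R) (s : R) :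
  dot n (fun l => v l - s * u l) (fun l => v l - s * u l)
  = dot n v v - 2 * s * dot n u v + s * s * dot n u u.
Proof. unfold dot; induction n as [|n IHn]; simpl; [ring | rewrite IHn; ring]. Qed.

Lemma dot_comb (n k : nat) (u : nat -> R) (c : nat -> R) (v : nat -> nat -> R) :
  dot n u (fun l => sum_f_R0 (fun j => c j * v j l) k)
  = sum_f_R0 (fun j => c j * dot n u (v j)) k.
Proof.
  unfold dot.
  transitivity (sum_f_R0 (fun l => sum_f_R0 (fun j => c j * (u l * v j l)) k) n).
  - apply sum_eq; intros l _. rewrite scal_sum. apply sum_eq; intros; ring.
  - rewrite sum_f_R0_swap. apply sum_eq; intros j _. rewrite scal_sum.
    apply sum_eq; intros; ring.
Qed.

(* [s] is meant to be [1] or [-1]; |v - s u|^2 = 2 - 2 s <u,v>. *)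
Lemma sph_dot_sign (n : nat) (u v : nat -> R) (s : R) :
  on_sphere n u -> on_sphere n v -> s * s = 1 ->
  s * dot n u v <= 1 /\
  (s * dot n u v = 1 -> forall l, (l <= n)%nat -> v l = s * u l).
Proof.
  unfold on_sphere; intros Hu Hv Hs.
  pose proof (dot_sub_scale_self n u v s) as E.
  rewrite Hu, Hv, Hs in E.
  pose proof (dot_self_ge0 n (fun l => v l - s * u l)).
  split; [lra|].
  intros Hd l Hl.
  assert (Hw : dot n (fun l => v l - s * u l) (fun l => v l - s * u l) = 0) by lra.
  pose proof (dot_self_eq0 n _ Hw l Hl). lra.
Qed.

Lemma sph_dot_bounds (n : nat) (u v : nat -> R) :
  on_sphere n u -> on_sphere n v -> -1 <= dot n u v <= 1.
Proof.
  intros Hu Hv.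
  pose proof (proj1 (sph_dot_sign n u v 1 Hu Hv ltac:(ring))).
  pose proof (proj1 (sph_dot_sign n u v (-1) Hu Hv ltac:(ring))).
  lra.
Qed.

Lemma sph_dot_interior (n : nat) (u v : nat -> R) :
  on_sphere n u -> on_sphere n v ->
  ~ (forall l, (l <= n)%nat -> v l = u l) ->
  ~ (forall l, (l <= n)%nat -> v l = - u l) ->
  -1 < dot n u v < 1.
Proof.
  intros Hu Hv Hne Hanti.
  destruct (sph_dot_sign n u v 1 Hu Hv ltac:(ring)) as [Hle Heq].
  destruct (sph_dot_sign n u v (-1) Hu Hv ltac:(ring)) as [Hge Heq'].
  split.
  - destruct (Req_dec (dot n u v) (-1)) as [E|E]; [|lra].
    exfalso. apply Hanti. intros l Hl. rewrite (Heq' ltac:(lra) l Hl). ring.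
  - destruct (Req_dec (dot n u v) 1) as [E|E]; [|lra].
    exfalso. apply Hne. intros l Hl. rewrite (Heq ltac:(lra) l Hl). ring.
Qed.

Definition log_coef (d : R) : R := acos d / sin (acos d).

Lemma log_coef_neq0 (d : R) : -1 < d < 1 -> log_coef d <> 0.
Proof.
  intros Hd. pose proof (acos_bound_lt d Hd) as Hth.
  assert (0 < sin (acos d)) by (apply sin_gt_0; lra).
  unfold log_coef, Rdiv. apply Rmult_integral_contrapositive_currified; [lra|].
  apply Rinv_neq_0_compat; lra.
Qed.

Lemma sph_log_eq (n : nat) (u v : nat -> R) (l : nat) :
  -1 <= dot n u v <= 1 ->
  sph_log n u v l = log_coef (dot n u v) * (v l - dot n u v * u l).
Proof. intros Hd. unfold sph_log, log_coef. rewrite cos_acos by lra. reflexivity. Qed.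

Lemma sph_log_dot1 (n : nat) (u v : nat -> R) (l : nat) :
  dot n u v = 1 -> sph_log n u v l = 0.
Proof. intros Hd. unfold sph_log. rewrite Hd, acos_1. unfold Rdiv. ring. Qed.

Section LinearIndependence.

Variables (n k : nat).

Lemma lin_indep_subset (P Q : nat -> Prop) (v : nat -> nat -> R) :
  (forall j, (j <= k)%nat -> Q j -> P j) -> lin_indep n k P v -> lin_indep n k Q v.
Proof.
  intros HQP HP c HcQ Hc j Hj.
  set (c' := fun j => if Compare_dec.le_dec j k then c j else 0).
  assert (Hc'j : c' j = 0).
  { apply HP; auto.
    - intros m Hm. unfold c'. destruct (Compare_dec.le_dec m k); [|reflexivity].
      apply HcQ. intro Hq. apply Hm, HQP; auto.
    - intros l Hl. rewrite <- (Hc l Hl). apply sum_eq; intros i Hi.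
      unfold c'. destruct (Compare_dec.le_dec i k); [reflexivity | lia]. }
  unfold c' in Hc'j. destruct (Compare_dec.le_dec j k); [exact Hc'j | lia].
Qed.

Lemma lin_indep_ext (P : nat -> Prop) (v w : nat -> nat -> R) :
  (forall j l, (j <= k)%nat -> (l <= n)%nat -> v j l = w j l) ->
  lin_indep n k P v <-> lin_indep n k P w.
Proof.
  intros Hvw; split; intros H c HcP Hc; apply H; auto;
    intros l Hl; rewrite <- (Hc l Hl); apply sum_eq; intros j Hj;
    rewrite (Hvw j l Hj Hl); reflexivity.
Qed.

Lemma lin_indep_scale (P : nat -> Prop) (a : nat -> R) (v : nat -> nat -> R) :
  (forall j, (j <= k)%nat -> P j -> a j <> 0) ->
  lin_indep n k P (fun j l => a j * v j l) <-> lin_indep n k P v.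
Proof.
  intros Ha; split; intros H c HcP Hc j Hj.
  all: assert (Hsupp : forall m, (m <= k)%nat -> c m <> 0 -> a m <> 0)
         by (intros m Hm Hcm; apply Ha; [assumption|];
             apply NNPP; intro Hp; apply Hcm, HcP, Hp).
  all: destruct (Req_dec (c j) 0) as [|Hcj]; [assumption | exfalso].
  - apply (Rmult_integral_contrapositive_currified (c j) (/ a j) Hcj
             (Rinv_neq_0_compat _ (Hsupp j Hj Hcj))).
    apply (H (fun j => c j / a j)); [| |assumption].
    + intros m Hm. rewrite (HcP m Hm). unfold Rdiv. ring.
    + intros l Hl. rewrite <- (Hc l Hl). apply sum_eq; intros m Hm.
      destruct (Req_dec (c m) 0) as [->|Hcm]; [unfold Rdiv; ring|].
      field. exact (Hsupp m Hm Hcm).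
  - apply (Rmult_integral_contrapositive_currified (c j) (a j) Hcj (Hsupp j Hj Hcj)).
    apply (H (fun j => c j * a j)); [| |assumption].
    + intros m Hm. rewrite (HcP m Hm). ring.
    + intros l Hl. rewrite <- (Hc l Hl). apply sum_eq; intros; ring.
Qed.

Lemma lin_indep_neq0 (P : nat -> Prop) (v : nat -> nat -> R) (j : nat) :
  lin_indep n k P v -> (j <= k)%nat -> P j ->
  ~ (forall l, (l <= n)%nat -> v j l = 0).
Proof.
  intros H Hj Hpj Hz.
  assert (Hd : (if Nat.eq_dec j j then 1 else 0) = 0).
  { apply (H (fun m => if Nat.eq_dec m j then 1 else 0)); auto.
    - intros m Hm. destruct (Nat.eq_dec m j) as [->|]; [contradiction | reflexivity].
    - intros l Hl. rewrite (sum_f_R0_delta (fun m => v m l)) by assumption.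
      rewrite Hz by assumption. ring. }
  destruct (Nat.eq_dec j j); [lra | contradiction].
Qed.

Lemma lin_indep_not_proportional (v : nat -> nat -> R) (s : R) (i j : nat) :
  lin_indep n k (fun _ => True) v -> (i <= k)%nat -> (j <= k)%nat -> j <> i ->
  ~ (forall l, (l <= n)%nat -> v j l = s * v i l).
Proof.
  intros H Hi Hj Hji Hprop.
  set (c := fun m => (if Nat.eq_dec m i then s else 0) + (if Nat.eq_dec m j then -1 else 0)).
  assert (Hcj : c j = 0).
  { apply H; [intros m Hm; contradiction (Hm I) | | assumption]. intros l Hl.
    transitivity (sum_f_R0 (fun m => (if Nat.eq_dec m i then s else 0) * v m l) k
                  + sum_f_R0 (fun m => (if Nat.eq_dec m j then -1 else 0) * v m l) k).
    - rewrite <- plus_sum. apply sum_eq; intros; unfold c; ring.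
    - rewrite !sum_f_R0_delta by assumption. rewrite Hprop by assumption. ring. }
  unfold c in Hcj. destruct (Nat.eq_dec j i); [contradiction|].
  destruct (Nat.eq_dec j j); [lra | contradiction].
Qed.

Definition shear (v : nat -> nat -> R) (i : nat) (d : nat -> R) : nat -> nat -> R :=
  fun j l => v j l - d j * v i l.

Lemma sum_comb_shear (v : nat -> nat -> R) (i : nat) (d c : nat -> R) (l : nat) :
  sum_f_R0 (fun j => c j * shear v i d j l) k
  = sum_f_R0 (fun j => c j * v j l) k - sum_f_R0 (fun j => c j * d j) k * v i l.
Proof.
  rewrite (Rmult_comm _ (v i l)), scal_sum, <- minus_sum.
  apply sum_eq; intros; unfold shear; ring.
Qed.

Lemma lin_indep_shear (v : nat -> nat -> R) (i : nat) (d : nat -> R) :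
  (i <= k)%nat -> lin_indep n k (fun _ => True) v ->
  lin_indep n k (fun j => j <> i) (shear v i d).
Proof.
  intros Hi H c Hci Hc j Hj.
  set (S := sum_f_R0 (fun m => c m * d m) k).
  assert (Hc' : c j + (if Nat.eq_dec j i then - S else 0) = 0).
  { apply (H (fun m => c m + (if Nat.eq_dec m i then - S else 0)));
      [intros m Hm; contradiction (Hm I) | | assumption].
    intros l Hl.
    transitivity (sum_f_R0 (fun m => c m * v m l) k
                  + sum_f_R0 (fun m => (if Nat.eq_dec m i then - S else 0) * v m l) k).
    - rewrite <- plus_sum. apply sum_eq; intros; ring.
    - rewrite sum_f_R0_delta by assumption.
      pose proof (sum_comb_shear v i d c l) as E. rewrite (Hc l Hl) in E.
      fold S in E. lra. }
  destruct (Nat.eq_dec j i) as [->|Hji].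
  - apply Hci. auto.
  - lra.
Qed.

(* Conversely, when d_j = <v_i, v_j> and |v_i| = 1, pairing a vanishing
   combination with v_i shows that its shear also vanishes. *)
Lemma lin_indep_unshear (v : nat -> nat -> R) (i : nat) :
  (i <= k)%nat -> dot n (v i) (v i) = 1 ->
  lin_indep n k (fun j => j <> i) (shear v i (fun j => dot n (v i) (v j))) ->
  lin_indep n k (fun _ => True) v.
Proof.
  intros Hi Hvi H c _ Hc.
  set (d := fun j => dot n (v i) (v j)).
  assert (Hcd : sum_f_R0 (fun j => c j * d j) k = 0).
  { unfold d. rewrite <- dot_comb. unfold dot. apply sum_eq_R0.
    intros l Hl. rewrite (Hc l Hl). ring. }
  assert (Hoff : forall j, (j <= k)%nat -> j <> i -> c j = 0).
  { intros j Hj Hji.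
    assert (Hz : (if Nat.eq_dec j i then 0 else c j) = 0).
    { apply (H (fun m => if Nat.eq_dec m i then 0 else c m)); auto.
      - intros m Hm. destruct (Nat.eq_dec m i); [reflexivity | contradiction].
      - intros l Hl.
        transitivity (sum_f_R0 (fun m => c m * shear v i d m l) k).
        + apply sum_eq; intros m _.
          destruct (Nat.eq_dec m i) as [->|]; [|reflexivity].
          unfold shear, d. rewrite Hvi. ring.
        + rewrite sum_comb_shear, (Hc l Hl), Hcd. ring. }
    destruct (Nat.eq_dec j i); [contradiction | exact Hz]. }
  assert (Hci : c i = 0).
  { rewrite <- Hcd.
    transitivity (sum_f_R0 (fun j => (if Nat.eq_dec j i then c i else 0) * d j) k).
    - rewrite sum_f_R0_delta by assumption. unfold d. rewrite Hvi. ring.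
    - apply sum_eq; intros j Hj. destruct (Nat.eq_dec j i) as [->|Hji]; [reflexivity|].
      rewrite Hoff by assumption. ring. }
  intros j Hj. destruct (Nat.eq_dec j i) as [->|]; auto.
Qed.

Lemma has_rank_full_iff (X : nat -> nat -> R) :
  has_rank n k X (S k) <-> lin_indep n k (fun _ => True) (col X).
Proof.
  split.
  - intros [[L [HL [HN [Hb HI]]]] _].
    apply (lin_indep_subset (fun j => In j L)); [|exact HI].
    intros j Hj _.
    apply (NoDup_length_incl HN (l' := seq 0 (S k))).
    + rewrite length_seq; lia.
    + intros a Ha. apply in_seq. apply Hb in Ha. lia.
    + apply in_seq. lia.
  - intros H. split.
    + exists (seq 0 (S k)). repeat split.
      * apply length_seq.
      * apply seq_NoDup.
      * intros j Hj. apply in_seq in Hj. lia.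
      * apply (lin_indep_subset (fun _ => True)); auto.
    + intros T HN Hb HL _.
      assert (Hincl : incl T (seq 0 (S k)))
        by (intros a Ha; apply in_seq; apply Hb in Ha; lia).
      pose proof (NoDup_incl_length HN Hincl) as Hlen.
      rewrite length_seq in Hlen. lia.
Qed.

End LinearIndependence.

Section SphericalLog.

Variables (n k : nat) (x : nat -> nat -> R).
Hypothesis hx : forall j, (j <= k)%nat -> on_sphere n (x j).

Lemma sph_log_lin_indep_iff_shear (i : nat) :
  (i <= k)%nat ->
  (forall j, (j <= k)%nat -> j <> i -> -1 < dot n (x i) (x j) < 1) ->
  lin_indep n k (fun j => j <> i) (fun j => sph_log n (x i) (x j))
  <-> lin_indep n k (fun j => j <> i) (shear x i (fun j => dot n (x i) (x j))).
Proof.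
  intros Hi Hint.
  rewrite (lin_indep_ext n k _ _
             (fun j l => log_coef (dot n (x i) (x j)) * shear x i (fun j => dot n (x i) (x j)) j l)).
  - apply lin_indep_scale. intros j Hj Hji. apply log_coef_neq0, Hint; assumption.
  - intros j l Hj _. apply sph_log_eq, sph_dot_bounds; auto.
Qed.

Lemma lin_indep_dot_interior (i j : nat) :
  lin_indep n k (fun _ => True) x -> (i <= k)%nat -> (j <= k)%nat -> j <> i ->
  -1 < dot n (x i) (x j) < 1.
Proof.
  intros H Hi Hj Hji. apply sph_dot_interior; auto.
  - intros E. apply (lin_indep_not_proportional n k x 1 i j H Hi Hj Hji).
    intros l Hl. rewrite E by assumption. ring.
  - intros E. apply (lin_indep_not_proportional n k x (-1) i j H Hi Hj Hji).
    intros l Hl. rewrite E by assumption. ring.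
Qed.

Lemma affinely_independent_dot_interior (i j : nat) :
  affinely_independent n k x -> (i <= k)%nat -> (j <= k)%nat -> j <> i ->
  -1 < dot n (x i) (x j) < 1.
Proof.
  intros [Hcut Hlog] Hi Hj Hji. apply sph_dot_interior; auto.
  - intros E. apply (lin_indep_neq0 n k _ _ j (Hlog i Hi) Hj Hji).
    intros l _. apply sph_log_dot1.
    rewrite <- (hx i Hi). unfold dot. apply sum_eq; intros m Hm. rewrite E; auto.
  - exact (Hcut i j Hi Hj Hji).
Qed.

End SphericalLog.

Theorem mainTheorem4 (n k : nat) (x : nat -> nat -> R)
  (hn : (1 <= n)%nat)
  (hx : forall j, (j <= k)%nat -> on_sphere n (x j)) :
  affinely_independent n k x <-> has_rank n k (coord_matrix x) (S k).
Proof.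
  rewrite (has_rank_full_iff n k). change (col (coord_matrix x)) with x.
  split.
  - intros Haff. apply (lin_indep_unshear n k x 0); [lia | apply hx; lia |].
    apply sph_log_lin_indep_iff_shear; [assumption | lia | |].
    + intros j Hj Hj0. apply (affinely_independent_dot_interior n k x hx); auto; lia.
    + apply (proj2 Haff); lia.
  - intros Hind. split.
    + intros i j Hi Hj Hji Hcut.
      apply (lin_indep_not_proportional n k x (-1) i j Hind Hi Hj Hji).
      intros l Hl. rewrite (Hcut l Hl). ring.
    + intros i Hi. apply sph_log_lin_indep_iff_shear; auto.
      * intros j Hj Hji. apply (lin_indep_dot_interior n k x hx); auto.
      * apply lin_indep_shear; assumption.
Qed.
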